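(* For any frame $L$, the map $f\mapsto \beta\circ f$, where $\beta\colon\mathrm{coS}(L)\to\mathfrak{B}(\mathrm{coS}(L))$, $S\mapsto S^{\ast\ast}$, restricts to an order isomorphism $\mathrm{F}(L)\to\mathrm{C}(\mathfrak{B}(\mathrm{coS}(L)))$.
   Context: $\mathbb{Q}$ is the rationals. A sublocale of $L$ is a subset closed under arbitrary meets and such that $x\to s\in S$ for $x\in L$, $s\in S$; $\mathrm{coS}(L)$ is the frame of sublocales ordered by reverse inclusion, with pseudocomplement $^\ast$. For a frame $M$, $\mathfrak{B}(M)=\{x\mid x=x^{\ast\ast}\}$ is its Booleanization (a complete Boolean algebra) and $x\mapsto x^{\ast\ast}$ is a frame homomorphism $M\to\mathfrak{B}(M)$. The frame $\mathfrak{L}(\overline{\mathbb{IR}})$ is presented by generators $(r,\textsf{---})$, $(\textsf{---},s)$ ($r,s\in\mathbb{Q}$) with relations (r1) $(r,\textsf{---})\wedge(\textsf{---},s)=0$ for $r\ge s$; (r3) $(r,\textsf{---})=\bigvee_{s>r}(s,\textsf{---})$; (r4) $(\textsf{---},s)=\bigvee_{r<s}(\textsf{---},r)$. For a frame $M$, homomorphisms $\mathfrak{L}(\overline{\mathbb{IR}})\to M$ are ordered by $f\le g$ iff $f(r,\textsf{---})\le g(r,\textsf{---})$ and $g(\textsf{---},s)\le f(\textsf{---},s)$; $\mathrm{C}(M)$ (continuous real functions) is the set of those $f$ with (r2) $f(r,\textsf{---})\vee f(\textsf{---},s)=1$ for $r<s$, (r5) $\bigvee_r f(r,\textsf{---})=1$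 and (r6) $\bigvee_s f(\textsf{---},s)=1$. $\overline{\mathrm{F}}(L)$ is the set of homomorphisms $f\colon\mathfrak{L}(\overline{\mathbb{IR}})\to\mathrm{coS}(L)$ with $f(r,\textsf{---})^\ast\le f(\textsf{---},s)$ and $f(\textsf{---},s)^\ast\le f(r,\textsf{---})$ for $r<s$; it is a complete lattice with top $\boldsymbol{+\infty}$ ($(r,\textsf{---})\mapsto1$, $(\textsf{---},s)\mapsto0$) and bottom $\boldsymbol{-\infty}$ ($(r,\textsf{---})\mapsto0$, $(\textsf{---},s)\mapsto1$). $\mathrm{F}(L)$ is the set of $f\in\overline{\mathrm{F}}(L)$ such that for all $g\in\overline{\mathrm{F}}(L)$, $f\vee g=\boldsymbol{+\infty}\Rightarrow g=\boldsymbol{+\infty}$ and $f\wedge g=\boldsymbol{-\infty}\Rightarrow g=\boldsymbol{-\infty}$. *)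

From mathcomp Require Import all_boot all_order all_algebra.
Set Implicit Arguments.
Unset Strict Implicit.
Unset Printing Implicit Defensive.
Import Order.TTheory GRing.Theory Num.Theory.
Local Open Scope ring_scope.

Record frame := Frame {
  fcar :> Type;
  fle : fcar -> fcar -> Prop;
  fjoin : (fcar -> Prop) -> fcar;
  fmeet : fcar -> fcar -> fcar;
  fle_refl : forall x, fle x x;
  fle_trans : forall x y z, fle x y -> fle y z -> fle x z;
  fle_anti : forall x y, fle x y -> fle y x -> x = y;
  fjoin_ub : forall (A : fcar -> Prop) x, A x -> fle x (fjoin A);
  fjoin_least : forall (A : fcar -> Prop) y,
      (forall x, A x -> fle x y) -> fle (fjoin A) y;
  fmeet_lb1 : forall x y, fle (fmeet x y) x;
  fmeet_lb2 : forall x y, fle (fmeet x y) y;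
  fmeet_glb : forall x y z, fle z x -> fle z y -> fle z (fmeet x y);
  fdistr : forall a (A : fcar -> Prop),
      fmeet a (fjoin A) = fjoin (fun y => exists2 x, A x & y = fmeet a x)
}.

(* A homomorphism out of the presented frame L(IR-bar) is (by the universal
   property of the presentation) the same thing as an assignment of values
   to the generators (r,---) (field [hup]) and (---,s) (field [hdown])
   satisfying the relations (r1),(r3),(r4). *)
Record rhom (X : Type) := RHom { hup : rat -> X; hdown : rat -> X }.

Section Defs.
Variable L : frame.

Definition ftop : L := fjoin (fun _ : L => True).
Definition finf (A : L -> Prop) : L := fjoin (fun y => forall a, A a -> fle y a).
Definition fimp (x s : L) : L := fjoin (fun y => fle (fmeet y x) s).

Definition sublocale (S : L -> Prop) : Prop :=
  (forall A : L -> Prop, (forall a, A a -> S a) -> S (finf A)) /\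
  (forall x s, S s -> S (fimp x s)).

(* ---- the frame coS(L): sublocales ordered by reverse inclusion ---- *)
Definition cle (S T : L -> Prop) : Prop := forall x, T x -> S x.
Definition cbot : L -> Prop := fun _ => True.
Definition ctop : L -> Prop := fun x => x = ftop.
Definition cmeet (S T : L -> Prop) : L -> Prop :=
  fun x => forall U, sublocale U -> (forall y, S y -> U y) ->
                     (forall y, T y -> U y) -> U x.
Definition cjoin2 (S T : L -> Prop) : L -> Prop := fun x => S x /\ T x.
Definition cjoinI (P : rat -> Prop) (F : rat -> L -> Prop) : L -> Prop :=
  fun x => forall s, P s -> F s x.
Definition cpc (S : L -> Prop) : L -> Prop :=
  fun x => forall T, sublocale T -> cmeet T S = cbot -> T x.

Definition regular (S : L -> Prop) : Prop := sublocale S /\ cpc (cpc S) = S.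
Definition breg (S : L -> Prop) : L -> Prop := cpc (cpc S).
(* joins in B(coS L) are the ** of joins in coS(L); meets, 0, 1 as in coS(L) *)
Definition bjoin2 (S T : L -> Prop) : L -> Prop := breg (cjoin2 S T).
Definition bjoinI (P : rat -> Prop) (F : rat -> L -> Prop) : L -> Prop :=
  breg (cjoinI P F).

Definition hle (f g : rhom (L -> Prop)) : Prop :=
  (forall r, cle (hup f r) (hup g r)) /\ (forall s, cle (hdown g s) (hdown f s)).

Definition coS_hom (f : rhom (L -> Prop)) : Prop :=
  (forall r, sublocale (hup f r)) /\ (forall s, sublocale (hdown f s)) /\
  (forall r s, s <= r -> cmeet (hup f r) (hdown f s) = cbot) /\
  (forall r, hup f r = cjoinI (fun s => r < s) (hup f)) /\
  (forall s, hdown f s = cjoinI (fun r => r < s) (hdown f)).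

Definition inFbar (f : rhom (L -> Prop)) : Prop :=
  coS_hom f /\
  (forall r s, r < s ->
     cle (cpc (hup f r)) (hdown f s) /\ cle (cpc (hdown f s)) (hup f r)).

Definition pinf : rhom (L -> Prop) := RHom (fun _ => ctop) (fun _ => cbot).
Definition minf : rhom (L -> Prop) := RHom (fun _ => cbot) (fun _ => ctop).

Definition Fbar_join (f g h : rhom (L -> Prop)) : Prop :=
  inFbar h /\ hle f h /\ hle g h /\
  (forall k, inFbar k -> hle f k -> hle g k -> hle h k).
Definition Fbar_meet (f g h : rhom (L -> Prop)) : Prop :=
  inFbar h /\ hle h f /\ hle h g /\
  (forall k, inFbar k -> hle k f -> hle k g -> hle k h).

Definition inF (f : rhom (L -> Prop)) : Prop :=
  inFbar f /\
  (forall g, inFbar g ->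
     (Fbar_join f g pinf -> g = pinf) /\ (Fbar_meet f g minf -> g = minf)).

Definition B_hom (f : rhom (L -> Prop)) : Prop :=
  (forall r, regular (hup f r)) /\ (forall s, regular (hdown f s)) /\
  (forall r s, s <= r -> cmeet (hup f r) (hdown f s) = cbot) /\
  (forall r, hup f r = bjoinI (fun s => r < s) (hup f)) /\
  (forall s, hdown f s = bjoinI (fun r => r < s) (hdown f)).

Definition inC (f : rhom (L -> Prop)) : Prop :=
  B_hom f /\
  (forall r s, r < s -> bjoin2 (hup f r) (hdown f s) = ctop) /\
  bjoinI (fun _ => True) (hup f) = ctop /\
  bjoinI (fun _ => True) (hdown f) = ctop.

Definition beta (f : rhom (L -> Prop)) : rhom (L -> Prop) :=
  RHom (fun r => breg (hup f r)) (fun s => breg (hdown f s)).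

End Defs.

(* An element f of Fbar(L) is determined by pseudocomplements: f(r,-) is the join of the
   f(-,s)* for s > r and f(-,s) the join of the f(r,-)* for r < s.  As S*** = S*, the same joins
   computed from beta f give back f, so beta is injective and order-reflecting on Fbar(L); its
   inverse sends h to the pair of joins of the h(-,s)* (s > r) and of the h(r,-)* (r < s), which
   for h in C(B(coS L)) lies in Fbar(L) and has Booleanization h.
   Membership in F(L) amounts to the density of the join A of all f(r,-) and of the join of all
   f(-,s); beta turns these into (r5) and (r6), while (r2) holds because S \/ S* is dense.  If A
   is dense and f /\ g = -oo, the explicit meet of f and g in Fbar(L) forces every g(t,-) to be
   disjoint from A, so g = -oo; conversely the constant element with values A* and A** meets f
   in -oo, which forces A* = 0.  The symmetry r |-> -r exchanging the two kinds of generators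
   reduces the +oo case to the -oo case. *)

From mathcomp Require Import all_boot all_order all_algebra.
From Stdlib Require Import FunctionalExtensionality PropExtensionality.
Import Order.TTheory GRing.Theory Num.Theory.

Set Implicit Arguments.
Unset Strict Implicit.
Unset Printing Implicit Defensive.
Local Open Scope ring_scope.

Lemma predext (T : Type) (P Q : T -> Prop) : (forall x, P x <-> Q x) -> P = Q.
Proof.
by move=> PQ; apply: functional_extensionality => x; apply: propositional_extensionality.
Qed.

Lemma ltr_add1 (R : numDomainType) (r : R) : r < r + 1.
Proof. by rewrite ltrDl. Qed.

Lemma ltr_sub1 (R : numDomainType) (s : R) : s - 1 < s.
Proof. by rewrite ltrBlDr ltrDl. Qed.

Lemma ltr_dense (R : numFieldType) (r t : R) : r < t -> exists2 m, r < m & m < t.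
Proof. by move=> /midf_lt [rm mt]; exists ((r + t) / 2). Qed.

Lemma rhom_ext (X : Type) (f g : rhom X) :
  (forall r, hup f r = hup g r) -> (forall s, hdown f s = hdown g s) -> f = g.
Proof.
case: f g => [fu fd] [gu gd] /= eq_u eq_d.
by congr RHom; apply: functional_extensionality.
Qed.

Section FrameTheory.
Variable L : frame.
Implicit Types (x y a b s : L) (A : L -> Prop).

Lemma fmeetC x y : fmeet x y = fmeet y x.
Proof. by apply: fle_anti; apply: fmeet_glb; (exact: fmeet_lb1 || exact: fmeet_lb2). Qed.

Lemma fle_top x : fle x (ftop L).
Proof. exact: (@fjoin_ub _ (fun _ => True)). Qed.

Lemma finf_lb A a : A a -> fle (finf A) a.
Proof. by move=> Aa; apply: fjoin_least => y; apply. Qed.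

Lemma finf_glb A y : (forall a, A a -> fle y a) -> fle y (finf A).
Proof. exact: (@fjoin_ub _ (fun y => forall a, A a -> fle y a)). Qed.

Lemma fmeet_mono x y x' y' : fle x x' -> fle y y' -> fle (fmeet x y) (fmeet x' y').
Proof.
move=> xx' yy'; apply: fmeet_glb.
- exact: fle_trans (fmeet_lb1 _ _) xx'.
- exact: fle_trans (fmeet_lb2 _ _) yy'.
Qed.

Lemma ftop_fmeet x : fmeet (ftop L) x = x.
Proof.
by apply: fle_anti; [exact: fmeet_lb2 | apply: fmeet_glb; [exact: fle_top | exact: fle_refl]].
Qed.

Lemma fmeet_ftop x : fmeet x (ftop L) = x.
Proof. by rewrite fmeetC ftop_fmeet. Qed.

Lemma fle_fimp x s y : fle y (fimp x s) <-> fle (fmeet y x) s.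
Proof.
split=> [le_y_xs | ]; last exact: (@fjoin_ub _ (fun y => fle (fmeet y x) s)).
apply: fle_trans (fmeet_mono le_y_xs (fle_refl x)) _.
rewrite fmeetC /fimp fdistr; apply: fjoin_least => _ [z zxs ->].
by rewrite fmeetC.
Qed.

Lemma fimp_mp x s : fle (fmeet (fimp x s) x) s.
Proof. exact/fle_fimp/fle_refl. Qed.

Lemma fimp_top x s : fle x s -> fimp x s = ftop L.
Proof.
move=> xs; apply: fle_anti; first exact: fle_top.
by apply/fle_fimp; apply: fle_trans (fmeet_lb2 _ _) xs.
Qed.

Lemma fimp_fmeet x a b : fimp x (fmeet a b) = fmeet (fimp x a) (fimp x b).
Proof.
apply: fle_anti.
  apply: fmeet_glb; apply/fle_fimp; apply: fle_trans (fimp_mp _ _) _;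
    [exact: fmeet_lb1 | exact: fmeet_lb2].
apply/fle_fimp; apply: fmeet_glb.
- exact: fle_trans (fmeet_mono (fmeet_lb1 _ _) (fle_refl x)) (fimp_mp _ _).
- exact: fle_trans (fmeet_mono (fmeet_lb2 _ _) (fle_refl x)) (fimp_mp _ _).
Qed.

Lemma fmeet_fimp s x : fle x s -> fmeet s (fimp s x) = x.
Proof.
move=> xs; apply: fle_anti; first by rewrite fmeetC; exact: fimp_mp.
by apply: fmeet_glb => //; apply/fle_fimp; exact: fmeet_lb1.
Qed.

End FrameTheory.

Section Sublocales.
Variable L : frame.
Implicit Types (x y a : L) (S T U X Y Z : L -> Prop).

Lemma sublocale_top S : sublocale S -> S (ftop L).
Proof.
case=> S_inf _; suff <- : finf (fun _ : L => False) = ftop L by apply: S_inf.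
by apply: fle_anti; [exact: fle_top | apply: finf_glb].
Qed.

Lemma sublocale_fmeet S a b : sublocale S -> S a -> S b -> S (fmeet a b).
Proof.
case=> S_inf _ Sa Sb; suff <- : finf (fun z => z = a \/ z = b) = fmeet a b.
  by apply: S_inf => z [->|->].
apply: fle_anti; first by apply: fmeet_glb; apply: finf_lb; [left | right].
by apply: finf_glb => z [->|->]; [exact: fmeet_lb1 | exact: fmeet_lb2].
Qed.

Lemma sublocale_inter (I : Type) (P : I -> Prop) (F : I -> L -> Prop) :
  (forall i, P i -> sublocale (F i)) -> sublocale (fun x => forall i, P i -> F i x).
Proof.
move=> subF; split=> [B allB i Pi | x y Fy i Pi].
  by apply: (proj1 (subF i Pi)) => b /allB; apply.
exact: (proj2 (subF i Pi)) (Fy i Pi).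
Qed.

Lemma sublocale_cjoinI (P : rat -> Prop) (F : rat -> L -> Prop) :
  (forall s, P s -> sublocale (F s)) -> sublocale (cjoinI P F).
Proof. exact: sublocale_inter. Qed.

Lemma sublocale_cjoin2 X Y : sublocale X -> sublocale Y -> sublocale (cjoin2 X Y).
Proof.
move=> [X_inf X_imp] [Y_inf Y_imp]; split=> [B allB | x y [Xy Yy]]; last by split; auto.
by split; [apply: X_inf | apply: Y_inf] => b /allB [].
Qed.

Lemma sublocale_cmeet X Y : sublocale (cmeet X Y).
Proof.
split=> [B allB | x y XYy] U subU XU YU.
  by apply: (proj1 subU) => b /allB; apply.
exact: (proj2 subU) (XYy U subU XU YU).
Qed.

Lemma sublocale_cpc X : sublocale (cpc X).
Proof.
split=> [B allB | x y Xy] T subT TX.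
  by apply: (proj1 subT) => b /allB; apply.
exact: (proj2 subT) (Xy T subT TX).
Qed.

Lemma sublocale_cbot : sublocale (@cbot L).
Proof. by []. Qed.

Lemma sublocale_ctop : sublocale (@ctop L).
Proof.
split=> [B allB | x y ->]; last by apply: fimp_top; exact: fle_top.
apply: fle_anti; first exact: fle_top.
by apply: finf_glb => b /allB ->; exact: fle_refl.
Qed.

Lemma cmeet_fmeet X Y x : sublocale X -> sublocale Y ->
  cmeet X Y x -> exists a t, [/\ X a, Y t & x = fmeet a t].
Proof.
move=> subX subY /(_ (fun x => exists a t, [/\ X a, Y t & x = fmeet a t])).
apply=> [|a Xa|t Yt]; last 2 first.
- by exists a, (ftop L); split; rewrite ?fmeet_ftop //; exact: sublocale_top.
- by exists (ftop L), t; split; rewrite ?ftop_fmeet //; exact: sublocale_top.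
split=> [B allB | y z [a [t [Xa Yt ->]]]]; last first.
  exists (fimp y a), (fimp y t); rewrite fimp_fmeet.
  by split => //; [exact: (proj2 subX) | exact: (proj2 subY)].
pose Ba := fun a => X a /\ exists2 t, Y t & B (fmeet a t).
pose Bt := fun t => Y t /\ exists2 a, X a & B (fmeet a t).
exists (finf Ba), (finf Bt); split.
- by apply: (proj1 subX) => a [].
- by apply: (proj1 subY) => t [].
apply: fle_anti.
  apply: fmeet_glb; apply: finf_glb.
    by move=> a [_ [t _ /finf_lb/fle_trans]]; apply; exact: fmeet_lb1.
  by move=> t [_ [a _ /finf_lb/fle_trans]]; apply; exact: fmeet_lb2.
apply: finf_glb => b Bb; have [a [t [Xa Yt Eb]]] := allB b Bb.
by rewrite Eb in Bb *; apply: fmeet_mono; apply: finf_lb; split=> //; [exists t | exists a].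
Qed.

(* Frame distributivity of coS(L): write [x] as [s /\ (s -> x)] with [s] the least element
   of [S] above [x]; each decomposition [x = a /\ t] shows that [s -> x = s -> t] lies in
   every [F i]. *)
Lemma cmeet_inter (I : Type) S (P : I -> Prop) (F : I -> L -> Prop) x :
  sublocale S -> (forall i, P i -> sublocale (F i)) ->
  (forall i, P i -> cmeet S (F i) x) -> cmeet S (fun y => forall i, P i -> F i y) x.
Proof.
move=> subS subF SFx.
pose s := finf (fun a => S a /\ fle x a).
have Ss : S s by apply: (proj1 subS) => a [].
have xs : fle x s by apply: finf_glb => a [].
rewrite -(fmeet_fimp xs) => U subU SU FU; apply: sublocale_fmeet; [exact: subU | exact: SU |].
apply: FU => i Pi; have [a [t [Sa Ft Ex]]] := cmeet_fmeet subS (subF i Pi) (SFx i Pi).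
have sa : fle s a by apply: finf_lb; split=> //; rewrite Ex; exact: fmeet_lb1.
by rewrite Ex fimp_fmeet (fimp_top sa) ftop_fmeet; apply: (proj2 (subF i Pi)).
Qed.

Lemma cmeet_inter_cbot (I : Type) S (P : I -> Prop) (F : I -> L -> Prop) :
  sublocale S -> (forall i, P i -> sublocale (F i)) ->
  (forall i, P i -> cmeet S (F i) = @cbot L) ->
  cmeet S (fun y => forall i, P i -> F i y) = @cbot L.
Proof.
move=> subS subF SF; apply: predext => x; split=> // _.
by apply: cmeet_inter => // i Pi; rewrite SF.
Qed.

Lemma cmeetC X Y : cmeet X Y = cmeet Y X.
Proof. by apply: predext => x; split=> XYx U subU XU YU; apply: XYx. Qed.

Lemma cle_trans X Y Z : cle X Y -> cle Y Z -> cle X Z.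
Proof. by move=> XY YZ x /YZ /XY. Qed.

Lemma cle_anti X Y : cle X Y -> cle Y X -> X = Y.
Proof. by move=> XY YX; apply: predext => x; split=> [/YX | /XY]. Qed.

Lemma cle_cbot_eq X : cle X (@cbot L) -> X = @cbot L.
Proof. by move=> Xbot; apply: cle_anti. Qed.

Lemma cle_ctop X : sublocale X -> cle X (@ctop L).
Proof. by move=> subX x ->; exact: sublocale_top. Qed.

Lemma cmeet_lel X Y : cle (cmeet X Y) X.
Proof. by move=> x Xx U _ XU _; exact: XU. Qed.

Lemma cmeet_ler X Y : cle (cmeet X Y) Y.
Proof. by move=> x Yx U _ _ YU; exact: YU. Qed.

Lemma cmeet_glb Z X Y : sublocale Z -> cle Z X -> cle Z Y -> cle Z (cmeet X Y).
Proof. by move=> subZ ZX ZY x; apply. Qed.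

Lemma cmeet_mono X X' Y Y' : cle X X' -> cle Y Y' -> cle (cmeet X Y) (cmeet X' Y').
Proof.
move=> XX' YY' x XYx U subU XU YU.
by apply: XYx => // y => [/XX' | /YY']; [exact: XU | exact: YU].
Qed.

Lemma cmeet_cbotW X X' Y Y' :
  cle X X' -> cle Y Y' -> cmeet X' Y' = @cbot L -> cmeet X Y = @cbot L.
Proof. by move=> XX' YY' XY'; apply: cle_cbot_eq; rewrite -XY'; exact: cmeet_mono. Qed.

Lemma cle_cpc T X : sublocale T -> cmeet T X = @cbot L -> cle T (cpc X).
Proof. by move=> subT TX x; apply. Qed.

Lemma cmeet_cpc X : sublocale X -> cmeet X (cpc X) = @cbot L.
Proof.
move=> subX.
have -> : cpc X = fun x => forall T, sublocale T /\ cmeet T X = @cbot L -> T x.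
  by apply: predext => x; split=> [Xx T [] | Xx T subT TX]; [exact: Xx | exact: Xx].
by apply: cmeet_inter_cbot => // T [subT TX] //; rewrite cmeetC.
Qed.

Lemma cpc_cmeet X : sublocale X -> cmeet (cpc X) X = @cbot L.
Proof. by move=> subX; rewrite cmeetC; exact: cmeet_cpc. Qed.

Lemma cpc_anti X Y : cle X Y -> cle (cpc Y) (cpc X).
Proof. by move=> XY x Yx T subT TX; apply: Yx (cmeet_cbotW _ XY TX). Qed.

Lemma cle_breg X : sublocale X -> cle X (breg X).
Proof. by move=> subX; apply: cle_cpc => //; exact: cmeet_cpc. Qed.

Lemma breg_mono X Y : cle X Y -> cle (breg X) (breg Y).
Proof. by move=> XY; do 2!apply: cpc_anti. Qed.

Lemma cpc_breg X : sublocale X -> cpc (breg X) = cpc X.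
Proof.
move=> subX; apply: cle_anti; last exact: cle_breg (sublocale_cpc X).
by apply: cpc_anti; exact: cle_breg.
Qed.

Lemma breg_id X : breg (breg X) = breg X.
Proof. by rewrite /breg cpc_breg //; exact: sublocale_cpc. Qed.

Lemma regular_breg X : regular (breg X).
Proof. by split; [exact: sublocale_cpc | exact: breg_id]. Qed.

Lemma cpc_cbot : cpc (@cbot L) = @ctop L.
Proof.
apply: cle_anti => [x -> T subT _ | x]; first exact: sublocale_top.
by apply; [exact: sublocale_ctop | apply: cle_cbot_eq; exact: cmeet_ler].
Qed.

Lemma cpc_ctop : cpc (@ctop L) = @cbot L.
Proof.
apply: cle_cbot_eq => x _ T subT TX.
have -> : T = cmeet T (@ctop L).
  by apply: cle_anti; [apply: cmeet_glb; [| | exact: cle_ctop] | exact: cmeet_lel].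
by rewrite TX.
Qed.

Definition dense X := cpc X = @cbot L.

Lemma dense_breg X : dense X -> breg X = @ctop L.
Proof. by rewrite /breg => ->; exact: cpc_cbot. Qed.

Lemma breg_dense X : sublocale X -> breg X = @ctop L -> dense X.
Proof. by move=> subX Xtop; rewrite /dense -cpc_breg // Xtop cpc_ctop. Qed.

Lemma cpc_cjoin2 X Y :
  sublocale X -> sublocale Y -> cpc (cjoin2 X Y) = cmeet (cpc X) (cpc Y).
Proof.
move=> subX subY; apply: cle_anti.
  by apply: cmeet_glb; [exact: sublocale_cpc | |]; apply: cpc_anti => x [].
apply: cle_cpc; first exact: sublocale_cmeet.
have -> : cjoin2 X Y = fun x => forall b : bool, True -> (if b then X else Y) x.
  apply: predext => x; split=> [[Xx Yx] [] | XYx] //.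
  by split; [exact: XYx true _ | exact: XYx false _].
apply: cmeet_inter_cbot => [|[] _ //|[] _]; first exact: sublocale_cmeet.
- by apply: cmeet_cbotW (cpc_cmeet subX) => //; exact: cmeet_lel.
- by apply: cmeet_cbotW (cpc_cmeet subY) => //; exact: cmeet_ler.
Qed.

Lemma breg_disj X Y : sublocale X ->
  cmeet X Y = @cbot L -> cmeet (breg X) (breg Y) = @cbot L.
Proof.
move=> subX /(cle_cpc subX)/breg_mono XY.
by apply: cmeet_cbotW XY _ (cpc_cmeet (sublocale_cpc _)).
Qed.

Lemma bjoin2_breg X Y : sublocale X -> sublocale Y -> cle (cpc X) Y ->
  bjoin2 (breg X) (breg Y) = @ctop L.
Proof.
move=> subX subY XY; apply: dense_breg.
rewrite /dense cpc_cjoin2 ?cpc_breg //; try exact: sublocale_cpc.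
by apply: cmeet_cbotW _ (cpc_anti XY) (cmeet_cpc (sublocale_cpc X)).
Qed.

Section JoinsIndexedByRationals.
Implicit Types (P : rat -> Prop) (F G : rat -> L -> Prop).

Lemma cjoinI_ub P F s : P s -> cle (F s) (cjoinI P F).
Proof. by move=> Ps x; apply. Qed.

Lemma cjoinI_lub P F Z : (forall s, P s -> cle (F s) Z) -> cle (cjoinI P F) Z.
Proof. by move=> FZ x Zx s Ps; apply: FZ. Qed.

Lemma cjoinI_mono P F G : (forall s, P s -> cle (F s) (G s)) -> cle (cjoinI P F) (cjoinI P G).
Proof. by move=> FG x Gx s Ps; apply: FG; auto. Qed.

Lemma cjoinI_const P X : (exists s, P s) -> cjoinI P (fun _ => X) = X.
Proof. by move=> [s Ps]; apply: predext => x; split=> [/(_ s Ps) | Xx t _]. Qed.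

Lemma bjoinI_breg P F : (forall s, P s -> sublocale (F s)) ->
  bjoinI P (fun s => breg (F s)) = breg (cjoinI P F).
Proof.
move=> subF; apply: cle_anti; last first.
  by apply: breg_mono; apply: cjoinI_mono => s Ps; exact: cle_breg (subF s Ps).
rewrite -[X in cle _ X]breg_id; apply: breg_mono; apply: cjoinI_lub => s Ps.
by apply: breg_mono; exact: cjoinI_ub.
Qed.

Lemma dense_cjoinI P F G : (forall s, P s -> sublocale (F s)) ->
  (forall s, breg (F s) = G s) -> bjoinI P G = @ctop L -> dense (cjoinI P F).
Proof.
move=> subF FG PG; apply: breg_dense; first exact: sublocale_cjoinI.
by rewrite -bjoinI_breg // -PG; congr bjoinI; exact: functional_extensionality.
Qed.

Lemma cjoinI_gt_split F r :
  cjoinI (fun s => r < s) F = cjoinI (fun s => r < s) (fun s => cjoinI (fun t => s < t) F).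
Proof.
apply: predext => x; split=> [Fx s rs t st | Fx t rt]; first exact: Fx (lt_trans rs st).
by have [m rm mt] := ltr_dense rt; exact: Fx m rm t mt.
Qed.

Lemma cjoinI_lt_split F s :
  cjoinI (fun r => r < s) F = cjoinI (fun r => r < s) (fun r => cjoinI (fun q => q < r) F).
Proof.
apply: predext => x; split=> [Fx r rs q qr | Fx q qs]; first exact: Fx (lt_trans qr rs).
by have [m qm ms] := ltr_dense qs; exact: Fx m ms q qm.
Qed.

Lemma cjoinI_opp P F : cjoinI P (fun s => F (- s)) = cjoinI (fun s => P (- s)) F.
Proof.
apply: predext => x; split=> Fx s Ps; last by apply: Fx; rewrite opprK.
by have := Fx (- s) Ps; rewrite opprK.
Qed.

End JoinsIndexedByRationals.

End Sublocales.

Section Fbar.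
Variable L : frame.
Implicit Types (f g h k : rhom (L -> Prop)) (X : L -> Prop).

Section FbarAxioms.
Variable f : rhom (L -> Prop).
Hypothesis fFb : inFbar f.

Lemma Fbar_sub_up r : sublocale (hup f r).
Proof. by case: fFb => [[]]. Qed.

Lemma Fbar_sub_down s : sublocale (hdown f s).
Proof. by case: fFb => [[_ []]]. Qed.

Lemma Fbar_r1 r s : s <= r -> cmeet (hup f r) (hdown f s) = @cbot L.
Proof. by case: fFb => [[_ [_ [r1 _]]] _]; exact: r1. Qed.

Lemma Fbar_r3 r : hup f r = cjoinI (fun s => r < s) (hup f).
Proof. by case: fFb => [[_ [_ [_ [r3 _]]]] _]. Qed.

Lemma Fbar_r4 s : hdown f s = cjoinI (fun r => r < s) (hdown f).
Proof. by case: fFb => [[_ [_ [_ [_ r4]]]] _]. Qed.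

Lemma Fbar_cpc_up r s : r < s -> cle (cpc (hup f r)) (hdown f s).
Proof. by case: fFb => _ c /c []. Qed.

Lemma Fbar_cpc_down r s : r < s -> cle (cpc (hdown f s)) (hup f r).
Proof. by case: fFb => _ c /c []. Qed.

Lemma Fbar_up_le_cpc r : cle (hup f r) (cpc (hdown f r)).
Proof. by apply: cle_cpc (Fbar_sub_up r) _; exact: Fbar_r1. Qed.

Lemma Fbar_down_le_cpc s : cle (hdown f s) (cpc (hup f s)).
Proof. by apply: cle_cpc (Fbar_sub_down s) _; rewrite cmeetC; exact: Fbar_r1. Qed.

Lemma Fbar_up_anti r r' : r <= r' -> cle (hup f r') (hup f r).
Proof.
rewrite le_eqVlt => /orP[/eqP-> // | rr'].
by rewrite [hup f r]Fbar_r3; exact: cjoinI_ub.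
Qed.

Lemma Fbar_breg_up r t : r < t -> cle (breg (hup f t)) (hup f r).
Proof.
by move=> rt; apply: cle_trans (Fbar_cpc_down rt); apply: cpc_anti; exact: Fbar_down_le_cpc.
Qed.

Lemma Fbar_up_rep r : hup f r = cjoinI (fun s => r < s) (fun s => cpc (hdown f s)).
Proof.
apply: cle_anti; last by apply: cjoinI_lub => s; exact: Fbar_cpc_down.
by rewrite Fbar_r3; apply: cjoinI_mono => s _; exact: Fbar_up_le_cpc.
Qed.

Lemma Fbar_down_rep s : hdown f s = cjoinI (fun r => r < s) (fun r => cpc (hup f r)).
Proof.
apply: cle_anti; last by apply: cjoinI_lub => r; exact: Fbar_cpc_up.
by rewrite Fbar_r4; apply: cjoinI_mono => r _; exact: Fbar_down_le_cpc.
Qed.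

End FbarAxioms.

Lemma inFbarI f :
  (forall r, sublocale (hup f r)) -> (forall s, sublocale (hdown f s)) ->
  (forall r s, s <= r -> cmeet (hup f r) (hdown f s) = @cbot L) ->
  (forall r, hup f r = cjoinI (fun s => r < s) (hup f)) ->
  (forall s, hdown f s = cjoinI (fun r => r < s) (hdown f)) ->
  (forall r s, r < s -> cle (cpc (hup f r)) (hdown f s)) ->
  (forall r s, r < s -> cle (cpc (hdown f s)) (hup f r)) -> inFbar f.
Proof. by move=> ? ? ? ? ? c1 c2; do !split=> //; [exact: c1 | exact: c2]. Qed.

Definition rhom_of_up (u : rat -> L -> Prop) : rhom (L -> Prop) :=
  RHom u (fun s => cjoinI (fun r => r < s) (fun r => cpc (u r))).

Lemma inFbar_of_up (u : rat -> L -> Prop) :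
  (forall r, sublocale (u r)) -> (forall r t, r < t -> cle (breg (u t)) (u r)) ->
  (forall r, u r = cjoinI (fun s => r < s) u) -> inFbar (rhom_of_up u).
Proof.
move=> sub_u breg_u u3.
have u_anti r t : r < t -> cle (u t) (u r).
  by move=> /breg_u; apply: cle_trans; exact: cle_breg.
apply: inFbarI => //=.
- by move=> s; apply: sublocale_cjoinI => r _; exact: sublocale_cpc.
- move=> r s sr; apply: cmeet_inter_cbot => // [q _|q qs]; first exact: sublocale_cpc.
  by apply: cmeet_cbotW (u_anti _ _ (lt_le_trans qs sr)) _ (cmeet_cpc (sub_u q)).
- by move=> s; exact: cjoinI_lt_split.
- by move=> r s rs; exact: cjoinI_ub.
- move=> r s /ltr_dense [m rm ms]; apply: cle_trans (breg_u _ _ rm).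
  by apply: cpc_anti; apply: cjoinI_ub.
Qed.

Lemma inFbar_const X Y : sublocale X -> sublocale Y -> cmeet X Y = @cbot L ->
  cle (cpc X) Y -> cle (cpc Y) X -> inFbar (RHom (fun _ => X) (fun _ => Y)).
Proof.
move=> subX subY XY cXY cYX; apply: inFbarI => //= [r|s].
  by rewrite cjoinI_const //; exists (r + 1); exact: ltr_add1.
by rewrite cjoinI_const //; exists (s - 1); exact: ltr_sub1.
Qed.

Lemma minf_Fbar : inFbar (minf L).
Proof.
apply: inFbar_const; [exact: sublocale_cbot | exact: sublocale_ctop | | |].
- by apply: cle_cbot_eq; exact: cmeet_lel.
- by rewrite cpc_cbot.
- by rewrite cpc_ctop.
Qed.

Lemma minf_hle f : inFbar f -> hle (minf L) f.
Proof. by move=> fFb; split=> [r | s]; [| exact: cle_ctop (Fbar_sub_down fFb s)]. Qed.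

Lemma Fbar_up_cbot k : inFbar k -> (forall r, hup k r = @cbot L) -> k = minf L.
Proof.
move=> kFb k0; apply: rhom_ext => //= s.
apply: cle_anti; first exact: cle_ctop (Fbar_sub_down kFb s).
by rewrite -cpc_cbot -(k0 (s - 1)); apply: (Fbar_cpc_up kFb); exact: ltr_sub1.
Qed.

Definition Fbar_inf f g : rhom (L -> Prop) :=
  rhom_of_up (fun r => cjoinI (fun s => r < s) (fun s => cmeet (hup f s) (hup g s))).

Lemma Fbar_infC f g : Fbar_inf f g = Fbar_inf g f.
Proof.
congr rhom_of_up; apply: functional_extensionality => r; congr cjoinI.
by apply: functional_extensionality => s; exact: cmeetC.
Qed.

Lemma Fbar_inf_hlel f g : inFbar f -> hle (Fbar_inf f g) f.
Proof.
move=> fFb; have up_le r : cle (hup (Fbar_inf f g) r) (hup f r).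
  apply: cjoinI_lub => s rs; apply: (cle_trans (Y := hup f s)); first exact: cmeet_lel.
  exact: Fbar_up_anti fFb _ _ (ltW rs).
split=> [|s]; first exact: up_le.
rewrite (Fbar_down_rep fFb s).
by apply: cjoinI_mono => r _; exact: cpc_anti (up_le r).
Qed.

Lemma Fbar_inf_hler f g : inFbar g -> hle (Fbar_inf f g) g.
Proof. by rewrite Fbar_infC; exact: Fbar_inf_hlel. Qed.

Lemma inFbar_inf f g : inFbar f -> inFbar g -> inFbar (Fbar_inf f g).
Proof.
move=> fFb gFb; apply: inFbar_of_up => [r | r t /ltr_dense [u ru ut] | r].
- by apply: sublocale_cjoinI => s _; exact: sublocale_cmeet.
- apply: (cle_trans (Y := cmeet (hup f u) (hup g u))); last exact: cjoinI_ub.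
  apply: cmeet_glb; first exact: sublocale_cpc.
  + apply: cle_trans (Fbar_breg_up fFb ut); apply: breg_mono.
    exact: (Fbar_inf_hlel g fFb).1.
  + apply: cle_trans (Fbar_breg_up gFb ut); apply: breg_mono.
    exact: (Fbar_inf_hler f gFb).1.
- exact: cjoinI_gt_split.
Qed.

Lemma Fbar_meet_minf f g : inFbar f -> inFbar g -> dense (cjoinI (fun _ => True) (hup f)) ->
  Fbar_meet f g (minf L) -> g = minf L.
Proof.
move=> fFb gFb dense_f [_ [_ [_ maxk]]].
have [inf0 _] := maxk _ (inFbar_inf fFb gFb) (Fbar_inf_hlel g fFb) (Fbar_inf_hler f gFb).
have fg0 s : cmeet (hup f s) (hup g s) = @cbot L.
  by apply: cle_cbot_eq; apply: cle_trans (inf0 (s - 1)); apply: cjoinI_ub; exact: ltr_sub1.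
apply: (Fbar_up_cbot gFb) => t; apply: cle_cbot_eq; rewrite -dense_f.
apply: cle_cpc (Fbar_sub_up gFb t) _.
apply: cmeet_inter_cbot => [|s _|s _]; [exact: Fbar_sub_up | exact: Fbar_sub_up |].
case: (leP s t) => [st | ts].
- apply: (cmeet_cbotW (Y' := hup f s) (Fbar_up_anti gFb st)) => //.
  by rewrite cmeetC.
- apply: (cmeet_cbotW (X' := hup g t) _ (Fbar_up_anti fFb (ltW ts))) => //.
  by rewrite cmeetC.
Qed.

Lemma inF_up_dense f : inF f -> dense (cjoinI (fun _ => True) (hup f)).
Proof.
move=> [fFb Fmax]; set A := cjoinI _ _.
have subA : sublocale A by apply: sublocale_cjoinI => r _; exact: Fbar_sub_up.
pose g := RHom (fun _ => cpc A) (fun _ => breg A).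
have gFb : inFbar g.
  apply: inFbar_const; try exact: sublocale_cpc; [exact: cmeet_cpc (sublocale_cpc A) | by [] |].
  by rewrite cpc_breg.
suff /(congr1 (fun k => hup k 0)) : g = minf L by [].
apply: (proj2 (Fmax g gFb)); split; first exact: minf_Fbar.
split; first exact: minf_hle fFb.
split; first exact: minf_hle gFb.
move=> k kFb [kf _] [kg _]; suff -> : k = minf L by split=> ? ?.
apply: (Fbar_up_cbot kFb) => r; apply: cle_cbot_eq; rewrite -(cmeet_cpc subA).
apply: cmeet_glb (Fbar_sub_up kFb r) _ (kg r).
by apply: cle_trans (kf r) _; exact: cjoinI_ub.
Qed.

End Fbar.

Section Flip.
Variable L : frame.
Implicit Types f g h k : rhom (L -> Prop).

Definition rflip f : rhom (L -> Prop) := RHom (fun r => hdown f (- r)) (fun s => hup f (- s)).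

Lemma rflipK : involutive rflip.
Proof. by move=> f; apply: rhom_ext => r /=; rewrite opprK. Qed.

Lemma inFbar_flip f : inFbar f -> inFbar (rflip f).
Proof.
move=> fFb; apply: inFbarI => /= [r | s | r s sr | r | s | r s rs | r s rs].
- exact: Fbar_sub_down.
- exact: Fbar_sub_up.
- by rewrite cmeetC; apply: (Fbar_r1 fFb); rewrite lerN2.
- rewrite cjoinI_opp [LHS](Fbar_r4 fFb); congr cjoinI.
  by apply: functional_extensionality => s; rewrite ltrNr.
- rewrite cjoinI_opp [LHS](Fbar_r3 fFb); congr cjoinI.
  by apply: functional_extensionality => r; rewrite ltrNl.
- by apply: (Fbar_cpc_down fFb); rewrite ltrN2.
- by apply: (Fbar_cpc_up fFb); rewrite ltrN2.
Qed.

Lemma hle_flip f g : hle f g -> hle (rflip g) (rflip f).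
Proof. by case=> fg_up fg_down; split=> r; [exact: fg_down | exact: fg_up]. Qed.

Lemma Fbar_join_flip f g h : Fbar_join f g h -> Fbar_meet (rflip f) (rflip g) (rflip h).
Proof.
case=> hFb [fh [gh hmin]]; split; first exact: inFbar_flip.
split; first exact: hle_flip.
split=> [|k kFb kf kg]; first exact: hle_flip.
rewrite -[k]rflipK; apply: hle_flip; apply: hmin; first exact: inFbar_flip.
- by rewrite -[f]rflipK; exact: hle_flip.
- by rewrite -[g]rflipK; exact: hle_flip.
Qed.

Lemma Fbar_meet_flip f g h : Fbar_meet f g h -> Fbar_join (rflip f) (rflip g) (rflip h).
Proof.
case=> hFb [hf [hg hmax]]; split; first exact: inFbar_flip.
split; first exact: hle_flip.
split=> [|k kFb fk gk]; first exact: hle_flip.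
rewrite -[k]rflipK; apply: hle_flip; apply: hmax; first exact: inFbar_flip.
- by rewrite -[f]rflipK; exact: hle_flip.
- by rewrite -[g]rflipK; exact: hle_flip.
Qed.

Lemma inF_flip f : inF f -> inF (rflip f).
Proof.
case=> fFb Fmax; split=> [|g gFb]; first exact: inFbar_flip.
have /Fmax [Fjoin Fmeet] := inFbar_flip gFb.
split=> [/Fbar_join_flip | /Fbar_meet_flip]; rewrite rflipK.
- by move/Fmeet => gflip; rewrite -[g]rflipK gflip.
- by move/Fjoin => gflip; rewrite -[g]rflipK gflip.
Qed.

Lemma inF_down_dense f : inF f -> dense (cjoinI (fun _ => True) (hdown f)).
Proof. by move/inF_flip/inF_up_dense; rewrite /= cjoinI_opp. Qed.

Lemma Fbar_join_pinf f g : inFbar f -> inFbar g -> dense (cjoinI (fun _ => True) (hdown f)) ->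
  Fbar_join f g (pinf L) -> g = pinf L.
Proof.
move=> fFb gFb dense_f /Fbar_join_flip fg.
rewrite -[g]rflipK (Fbar_meet_minf (inFbar_flip fFb) (inFbar_flip gFb) _ fg) //.
by rewrite /= cjoinI_opp.
Qed.

Lemma inF_dense f : inFbar f ->
  dense (cjoinI (fun _ => True) (hup f)) -> dense (cjoinI (fun _ => True) (hdown f)) -> inF f.
Proof.
move=> fFb dense_up dense_down; split=> // g gFb.
by split; [exact: Fbar_join_pinf | exact: Fbar_meet_minf].
Qed.

End Flip.

Section Beta.
Variable L : frame.
Implicit Types f g h k : rhom (L -> Prop).

Definition beta_inv h : rhom (L -> Prop) :=
  RHom (fun r => cjoinI (fun s => r < s) (fun s => cpc (hdown h s)))
       (fun s => cjoinI (fun r => r < s) (fun r => cpc (hup h r))).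

Lemma beta_inv_sub_up h r : sublocale (hup (beta_inv h) r).
Proof. by apply: sublocale_cjoinI => s _; exact: sublocale_cpc. Qed.

Lemma beta_inv_sub_down h s : sublocale (hdown (beta_inv h) s).
Proof. by apply: sublocale_cjoinI => r _; exact: sublocale_cpc. Qed.

Lemma beta_mono f g : hle f g -> hle (beta f) (beta g).
Proof. by case=> fg_up fg_down; split=> r; apply: breg_mono. Qed.

Lemma beta_inv_mono h k : hle h k -> hle (beta_inv h) (beta_inv k).
Proof. by case=> hk_up hk_down; split=> r; apply: cjoinI_mono => s _; apply: cpc_anti. Qed.

Lemma betaK f : inFbar f -> beta_inv (beta f) = f.
Proof.
move=> fFb; apply: rhom_ext => [r | s] /=.
  rewrite (Fbar_up_rep fFb r); congr cjoinI; apply: functional_extensionality => s.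
  exact: cpc_breg (Fbar_sub_down fFb s).
rewrite (Fbar_down_rep fFb s); congr cjoinI; apply: functional_extensionality => r.
exact: cpc_breg (Fbar_sub_up fFb r).
Qed.

Lemma inC_beta f : inFbar f -> dense (cjoinI (fun _ => True) (hup f)) ->
  dense (cjoinI (fun _ => True) (hdown f)) -> inC (beta f).
Proof.
move=> fFb dense_up dense_down.
have bjoin_up P : bjoinI P (hup (beta f)) = breg (cjoinI P (hup f)).
  by apply: bjoinI_breg => r _; exact: Fbar_sub_up.
have bjoin_down P : bjoinI P (hdown (beta f)) = breg (cjoinI P (hdown f)).
  by apply: bjoinI_breg => s _; exact: Fbar_sub_down.
split.
  split; [|split; [|split; [|split]]].
  - by move=> r; exact: regular_breg.
  - by move=> s; exact: regular_breg.
  - by move=> r s sr; apply: breg_disj (Fbar_sub_up fFb r) (Fbar_r1 fFb sr).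
  - by move=> r; rewrite bjoin_up -(Fbar_r3 fFb).
  - by move=> s; rewrite bjoin_down -(Fbar_r4 fFb).
split; last by rewrite bjoin_up bjoin_down !dense_breg.
move=> r s rs.
exact: bjoin2_breg (Fbar_sub_up fFb r) (Fbar_sub_down fFb s) (Fbar_cpc_up fFb rs).
Qed.

Section Surjectivity.
Variable h : rhom (L -> Prop).
Hypothesis hC : inC h.

Lemma C_regular_up r : regular (hup h r).
Proof. by case: hC => [[]]. Qed.

Lemma C_regular_down s : regular (hdown h s).
Proof. by case: hC => [[_ []]]. Qed.

Lemma C_up_le_cpc r : cle (hup h r) (cpc (hdown h r)).
Proof.
case: hC => [[_ [_ [r1 _]]] _]; apply: cle_cpc (r1 r r (lexx r)).
exact: (C_regular_up r).1.
Qed.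

Lemma C_down_le_cpc s : cle (hdown h s) (cpc (hup h s)).
Proof.
case: hC => [[_ [_ [r1 _]]] _]; apply: cle_cpc; first exact: (C_regular_down s).1.
by rewrite cmeetC; exact: r1.
Qed.

Lemma C_cpc_disj r t : r < t -> cmeet (cpc (hup h r)) (cpc (hdown h t)) = @cbot L.
Proof.
case: hC => _ [r2 _] /r2 r2t.
have [subr subt] := ((C_regular_up r).1, (C_regular_down t).1).
by rewrite -cpc_cjoin2 //; apply: breg_dense r2t; exact: sublocale_cjoin2.
Qed.

Lemma C_cpc_down r t : r < t -> cle (cpc (hdown h t)) (hup h r).
Proof.
move=> rt; rewrite -(C_regular_up r).2; apply: cle_cpc; first exact: sublocale_cpc.
by rewrite cmeetC; exact: C_cpc_disj.
Qed.

Lemma C_cpc_up r t : r < t -> cle (cpc (hup h r)) (hdown h t).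
Proof.
move=> rt; rewrite -(C_regular_down t).2; apply: cle_cpc; first exact: sublocale_cpc.
exact: C_cpc_disj.
Qed.

Lemma breg_beta_inv_up r : breg (hup (beta_inv h) r) = hup h r.
Proof.
case: hC => [[_ [_ [_ [r3 _]]]] _]; apply: cle_anti.
  rewrite -[X in cle _ X](C_regular_up r).2; apply: breg_mono.
  by apply: cjoinI_lub => s; exact: C_cpc_down.
rewrite [X in cle X _]r3; apply: breg_mono.
by apply: cjoinI_mono => s _; exact: C_up_le_cpc.
Qed.

Lemma breg_beta_inv_down s : breg (hdown (beta_inv h) s) = hdown h s.
Proof.
case: hC => [[_ [_ [_ [_ r4]]]] _]; apply: cle_anti.
  rewrite -[X in cle _ X](C_regular_down s).2; apply: breg_mono.
  by apply: cjoinI_lub => r; exact: C_cpc_up.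
rewrite [X in cle X _]r4; apply: breg_mono.
by apply: cjoinI_mono => r _; exact: C_down_le_cpc.
Qed.

Lemma beta_invK : beta (beta_inv h) = h.
Proof. by apply: rhom_ext => r /=; [exact: breg_beta_inv_up | exact: breg_beta_inv_down]. Qed.

Lemma inFbar_beta_inv : inFbar (beta_inv h).
Proof.
have -> : beta_inv h = rhom_of_up (hup (beta_inv h)).
  apply: rhom_ext => //= s; congr cjoinI; apply: functional_extensionality => r.
  by rewrite -(breg_beta_inv_up r) cpc_breg //; exact: beta_inv_sub_up.
apply: inFbar_of_up => [r | r t rt | r]; first exact: beta_inv_sub_up.
  rewrite breg_beta_inv_up; apply: (cle_trans (Y := cpc (hdown h t))); first exact: C_up_le_cpc.
  exact: cjoinI_ub.
exact: cjoinI_gt_split.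
Qed.

Lemma inF_beta_inv : inF (beta_inv h).
Proof.
case: hC => _ [_ [r5 r6]]; apply: inF_dense; first exact: inFbar_beta_inv.
  by apply: dense_cjoinI r5 => [r _|]; [exact: beta_inv_sub_up | exact: breg_beta_inv_up].
by apply: dense_cjoinI r6 => [s _|]; [exact: beta_inv_sub_down | exact: breg_beta_inv_down].
Qed.

End Surjectivity.

End Beta.

Theorem mainTheorem15 (L : frame) :
  (forall f : rhom (fcar L -> Prop), inF f -> inC (beta f)) /\
  (forall f g : rhom (fcar L -> Prop), inF f -> inF g ->
     (hle f g <-> hle (beta f) (beta g))) /\
  (forall f g : rhom (fcar L -> Prop), inF f -> inF g -> beta f = beta g -> f = g) /\
  (forall h : rhom (fcar L -> Prop), inC h -> exists2 f, inF f & beta f = h).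
Proof.
split; [|split; [|split]].
- move=> f fF; apply: inC_beta (inF_up_dense fF) (inF_down_dense fF).
  exact: fF.1.
- move=> f g [fFb _] [gFb _]; split; first exact: beta_mono.
  by move/beta_inv_mono; rewrite !betaK.
- by move=> f g [fFb _] [gFb _] fg; rewrite -(betaK fFb) fg betaK.
- by move=> h hC; exists (beta_inv h); [exact: inF_beta_inv | exact: beta_invK].
Qed.
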